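(* Let $\mu \in X^*(\underline{T})$ be a character. \begin{enumerate} \item $\Lambda_W^\mu$ is the set of $\omega'\in \Lambda_W$ such that $\mathrm{Trns}_{\mu}(\omega', \underline{A}) \in \underline{C}_0 / (p-\pi)X^0(\underline{T})$. In particular, $\mathrm{Trns}_{\mu}(\omega', \underline{A})$ is $p$-regular (since our alcoves are open). \item For any $a\in \mathcal{A}$ and $\omega'\in \Lambda_W^\mu$, the image of $\mathrm{Trns}'_\mu(\omega',a)$ in $\Lambda_W$ is $p$-regular, in the same $\widetilde{\underline{W}}^{\mathrm{der}}$-orbit (for the dot action) as $\omega'+\overline{\mu-\eta}$ and is in alcove $\pi^{-1}(a)$. Moreover, there exists $\widetilde{w}\in \underline{W}_a^{\mathrm{der}}$ such that \[ \mathrm{Trns}_\mu(\omega',a)\equiv \widetilde{w}\cdot \big(\mu-\eta+(1-p\pi^{-1})\circ\mathrm{sec}(\omega')\big)\ \mod (p-\pi)X^0(\underline{T}) \] (note that $\underline{W}_a^{\mathrm{der}}$ acts naturally via the $p$-dot action on $X^*(\underline{T})/(p-\pi)X^0(\underline{T})$). \item $(\mathrm{Trns}_\mu(\omega',a)-\mu+\eta)|_{\underline{Z}}=(\mathrm{Trns}_\mu(\omega',a)-\mu)|_{\underline{Z}}\in (p-\pi)X^*(\underline{Z})$. \end{enumerate}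
   Context: Let $\underline{G}=(\mathrm{Res}_{\mathbb{F}_{p^f}/\mathbb{F}_p}\mathrm{GL}_3)\times\mathbb{F}\cong\mathrm{GL}_3^f$ with diagonal torus $\underline T$ and center $\underline Z$, $X^*(\underline T)\cong(\mathbb{Z}^3)^f$, $\eta=((1,0,-1))_i$, $\pi$ the Frobenius shift $(\pi\lambda)_i=\lambda_{i-1}$. Let $\Lambda_W$, $\Lambda_R$ be the weight and root lattices of $\underline G^{\mathrm{der}}\cong\mathrm{SL}_3^f$, $\lambda\mapsto\overline\lambda$ the restriction $X^*(\underline T)\to\Lambda_W$ with kernel $X^0(\underline T)$, $\mathrm{can}:\Lambda_R\to\ker(X^*(\underline T)\to X^*(\underline Z))$ the canonical isomorphism (identifying $\underline W_a^{\mathrm{der}}$ with the affine Weyl group of $\underline G$), and $\mathrm{sec}:\Lambda_W\to X^*(\underline T)$ a fixed section. All actions of (extended) affine Weyl groups are $p$-dot actions $t_\lambda w\cdot\mu=p\lambda+w(\mu+\eta)-\eta$. $\underline{A}$ is the lowest dominant $p$-restricted alcove for $\mathrm{SL}_3^f$, $\underline C_0$ the lowest dominant alcove in $X^*(\underline T)\otimes\mathbb R$, $\mathcal A=\{A,B\}^f$ the dominant $p$-restricted alcoves, $\widetilde{\underline W}^{+,\mathrm{der}}_1$ the elements of $\Lambda_W\rtimes S_3^f$ taking $\underline A$ into $\mathcal A$ (written $wt_{-\pi^{-1}\omega}$). Every element of $\Lambda_W\times\mathcal A$ is uniquely $(\omega+\nu,\pi wt_{-\pi^{-1}\omega}\cdot\underline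 A)$ with $\nu\in\Lambda_R$, $wt_{-\pi^{-1}\omega}\in\widetilde{\underline W}^{+,\mathrm{der}}_1$, and one defines $\mathrm{Trns}'_\mu(\omega+\nu,\pi wt_{-\pi^{-1}\omega}\cdot\underline A)=wt_{-\pi^{-1}\mathrm{sec}(\omega)}\cdot(\mu-\eta+\mathrm{can}(\nu)+\mathrm{sec}(\omega))\in X^*(\underline T)$ and $\mathrm{Trns}_\mu$ its image in $X^*(\underline T)/(p-\pi)X^0(\underline T)$ (independent of $\mathrm{sec}$). $\Lambda_W^\mu=\{\omega\in\Lambda_W:\omega+\overline{\mu-\eta}\in\underline A\}$. A weight $\lambda$ is $p$-regular if $\langle\lambda+\eta,\alpha^\vee\rangle\notin p\mathbb{Z}$ for all positive roots $\alpha$. *)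

From Stdlib Require Import Rdefinitions ClassicalEpsilon.
From HB Require Import structures.
From mathcomp Require Import all_boot all_order all_algebra all_fingroup.
From mathcomp Require Import Rstruct.
Set Implicit Arguments. Unset Strict Implicit. Unset Printing Implicit Defensive.
Import Order.TTheory GRing.Theory Num.Theory.
Local Open Scope ring_scope.

(* G = GL_3^f.  A character lambda in X^*(T) = (Z^3)^f is an
   f x 3 integer matrix (row i = i-th GL_3 factor).  The weight lattice
   Lambda_W of SL_3^f is identified with (Z^2)^f via the coordinates
   (<lambda,alpha_1^vee>, <lambda,alpha_2^vee>) (an f x 2 matrix); the
   restriction map X^*(T) -> Lambda_W is [resW].  Real points of
   Lambda_W (x) R are f x 2 real matrices. *)

Section Defs.
Variable f : nat.
Variable p : nat.

Notation XT := 'M[int]_(f, 3).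
Notation LW := 'M[int]_(f, 2).

Definition piM {R : Type} {n : nat} (l : 'M[R]_(f, n)) : 'M[R]_(f, n) :=
  \matrix_(i, j) l (ord_pred i) j.
Definition piinvM {R : Type} {n : nat} (l : 'M[R]_(f, n)) : 'M[R]_(f, n) :=
  \matrix_(i, j) l (ordS i) j.

Definition resW {R : zmodType} (l : 'M[R]_(f, 3)) : 'M[R]_(f, 2) :=
  \matrix_(i, j) (if (j : nat) == 0%N then l i (inord 0) - l i (inord 1)
                  else l i (inord 1) - l i (inord 2)).
(* a lift Lambda_W -> X^*(T) (used only to transport the Weyl action) *)
Definition liftW {R : zmodType} (x : 'M[R]_(f, 2)) : 'M[R]_(f, 3) :=
  \matrix_(i, j) (if (j : nat) == 0%N then x i (inord 0) + x i (inord 1)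
                  else if (j : nat) == 1%N then x i (inord 1) else 0).

(* restriction X^*(T) -> X^*(Z) = Z^f *)
Definition resZ (l : XT) : 'M[int]_(f, 1) :=
  \matrix_(i, j) (l i (inord 0) + l i (inord 1) + l i (inord 2)).

Definition actX {R : Type} (w : 'I_f -> 'S_3) (l : 'M[R]_(f, 3)) : 'M[R]_(f, 3) :=
  \matrix_(i, j) l i ((w i)^-1 j)%g.
Definition actL {R : zmodType} (w : 'I_f -> 'S_3) (x : 'M[R]_(f, 2)) :=
  resW (actX w (liftW x)).

Definition etaX : XT :=
  \matrix_(i, j) (if (j : nat) == 0%N then 1 else if (j : nat) == 1%N then 0 else -1).
Definition etaL {R : nzRingType} : 'M[R]_(f, 2) := \matrix_(i, j) 1.

Definition wt_dotX (w : 'I_f -> 'S_3) (lam x : XT) : XT :=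
  actX w ((p%:Z) *: lam + x + etaX) - etaX.
Definition wt_dotL {R : comNzRingType} (w : 'I_f -> 'S_3) (lam x : 'M[R]_(f, 2)) :=
  actL w (p%:R *: lam + x + etaL) - etaL.
Definition tw_dotL (lam : LW) (w : 'I_f -> 'S_3) (x : LW) : LW :=
  p%:Z *: lam + actL w (x + etaL) - etaL.

(* root lattice Lambda_R inside Lambda_W *)
Definition inLR (nu : LW) : Prop := forall i, dvdz 3 (nu i (inord 0) - nu i (inord 1)).
(* canonical isomorphism Lambda_R -> ker(X^*(T) -> X^*(Z)):
   nu = m alpha_1 + n alpha_2  |->  (m, n - m, -n) in each factor *)
Definition can (nu : LW) : XT :=
  \matrix_(i, j)
   (let m := divz (2 * nu i (inord 0) + nu i (inord 1)) 3 in
    let n := divz (nu i (inord 0) + 2 * nu i (inord 1)) 3 in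
    if (j : nat) == 0%N then m else if (j : nat) == 1%N then n - m else - n).
(* p-dot action of the affine Weyl group W_a^der = Lambda_R x| S_3^f on
   X^*(T), via can:  t_nu w . l = p can(nu) + w(l + eta) - eta *)
Definition Wa_dotX (nu : LW) (w : 'I_f -> 'S_3) (l : XT) : XT :=
  p%:Z *: can nu + actX w (l + etaX) - etaX.

(* congruence modulo (p - pi) X^0(T); X^0(T) = characters constant on each factor *)
Definition X0 (c : 'M[int]_(f, 1)) : XT := \matrix_(i, j) c i 0.
Definition congrX (l1 l2 : XT) : Prop :=
  exists c : 'M[int]_(f, 1), l1 - l2 = p%:Z *: X0 c - piM (X0 c).

Inductive AB := AlcA | AlcB.
Definition alcf := 'I_f -> AB.
Definition Aunder : alcf := fun _ => AlcA.
Definition piinv_alc (a : alcf) : alcf := fun i => a (ordS i).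

Definition in_alc (a : alcf) (x : 'M[R]_(f, 2)) : Prop :=
  forall i, let y0 := x i (inord 0) + 1 in let y1 := x i (inord 1) + 1 in
  match a i with
  | AlcA => 0 < y0 /\ 0 < y1 /\ y0 + y1 < p%:R
  | AlcB => p%:R < y0 + y1 /\ y0 < p%:R /\ y1 < p%:R
  end.
Definition toR (x : LW) : 'M[R]_(f, 2) := map_mx intr x.

Definition maps_A_to (w : 'I_f -> 'S_3) (lam : LW) (b : alcf) : Prop :=
  forall y : 'M[R]_(f, 2),
    in_alc b y <-> exists x, in_alc Aunder x /\ y = wt_dotL w (toR lam) x.

(* w t_{-pi^{-1} om} in \tilde W_1^{+,der}: it takes A into a restricted alcove *)
Definition inW1 (w : 'I_f -> 'S_3) (om : LW) : Prop :=
  exists b : alcf, maps_A_to w (- piinvM om) b.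

(* (om2, a) = (om + nu, pi w t_{-pi^{-1} om} . A) *)
Definition decomp (om2 : LW) (a : alcf)
    (d : LW * LW * ('I_f -> 'S_3)) : Prop :=
  let: (om, nu, w) := d in
  [/\ om2 = om + nu, inLR nu, inW1 w om & maps_A_to w (- piinvM om) (piinv_alc a)].

Definition Trnsp (mu : XT) (sec : LW -> XT) (om2 : LW) (a : alcf) : XT :=
  let: (om, nu, w) :=
     epsilon (inhabits (0, 0, fun _ => 1%g)) (decomp om2 a) in
  wt_dotX w (- piinvM (sec om)) (mu - etaX + can nu + sec om).

(* lowest dominant alcove C_0 (integral points), modulo (p - pi) X^0 *)
Definition inC0 (l : XT) : Prop := in_alc Aunder (toR (resW l)).
Definition inC0mod (l : XT) : Prop := exists l', congrX l' l /\ inC0 l'.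

Definition pregL (x : LW) : Prop :=
  forall i, ~~ dvdz p%:Z (x i (inord 0) + 1) /\ ~~ dvdz p%:Z (x i (inord 1) + 1)
            /\ ~~ dvdz p%:Z (x i (inord 0) + x i (inord 1) + 2).
Definition pregX (l : XT) : Prop := pregL (resW l).

Definition LWmu (mu : XT) (om : LW) : Prop := in_alc Aunder (toR (om + resW (mu - etaX))).

End Defs.

From Pilot Require Import Defs.
From Stdlib Require Import Rdefinitions ClassicalEpsilon.
From HB Require Import structures.
From mathcomp Require Import all_boot all_order all_algebra all_fingroup.
From mathcomp Require Import Rstruct ring lra zify.
Set Implicit Arguments. Unset Strict Implicit. Unset Printing Implicit Defensive.
Import Order.TTheory GRing.Theory Num.Theory.
Local Open Scope ring_scope.

(* Write omega' = omega + nu with nu in the root lattice and w t_{-pi^-1 omega}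
   taking A onto pi^-1(a); factor by factor, omega can be taken among six explicit
   weights, according to the class of omega' modulo Lambda_R and the type of a.
   Since sec and can are sections of the restriction to Lambda_W, the image of
   Trns'_mu(omega', a) in Lambda_W is w t_{-pi^-1 omega} . (omega' + resW(mu - eta)),
   and this p-dot action is a bijection carrying A onto pi^-1(a).  This gives (1)
   and the alcove statements of (2); integral points of open alcoves are
   p-regular.  Next, sec(omega') - sec(omega) - can(nu) lies in X^0(T), on which
   S_3^f acts trivially, whence the congruence of (2).  Finally, restriction to Z
   kills eta, can(nu) and the Weyl action, leaving
   (1 - p pi^-1) sec(omega)|_Z = (p - pi)(- pi^-1 sec(omega)|_Z), which is (3). *)

(* [actX] alone would resolve to the fingroup lemma of the same name. *)
Local Notation actX := Defs.actX.

Lemma ord3P (k : 'I_3) : [\/ k = inord 0, k = inord 1 | k = inord 2].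
Proof.
case: k => [[|[|[|//]]] lt_k3]; [constructor 1 | constructor 2 | constructor 3];
  by apply: val_inj; rewrite /= inordK.
Qed.

Lemma ord2P (k : 'I_2) : k = inord 0 \/ k = inord 1.
Proof. by case: k => [[|[|//]] lt_k2]; [left|right]; apply: val_inj; rewrite /= inordK. Qed.

Lemma val_inord0 n : ((inord 0 : 'I_n.+1) : nat) = 0%N. Proof. exact: inordK. Qed.
Lemma val_inord1 n : ((inord 1 : 'I_n.+2) : nat) = 1%N. Proof. exact: inordK. Qed.
Lemma val_inord2 n : ((inord 2 : 'I_n.+3) : nat) = 2%N. Proof. exact: inordK. Qed.

Definition val_inordE := (val_inord0, val_inord1, val_inord2).

Section Linearity.
Variables (f : nat) (R : comPzRingType).

Fact resW_is_linear : linear (@resW f R).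
Proof. by move=> a x y; apply/matrixP=> i j; rewrite !mxE; case: ifP => _; ring. Qed.
HB.instance Definition _ := GRing.isLinear.Build R _ _ _ (@resW f R) resW_is_linear.

Fact liftW_is_linear : linear (@liftW f R).
Proof. by move=> a x y; apply/matrixP=> i j; rewrite !mxE; do !case: ifP => _; ring. Qed.
HB.instance Definition _ := GRing.isLinear.Build R _ _ _ (@liftW f R) liftW_is_linear.

Fact actX_is_linear w : linear (@actX f R w).
Proof. by move=> a x y; apply/matrixP=> i j; rewrite !mxE. Qed.
HB.instance Definition _ w := GRing.isLinear.Build R _ _ _ (@actX f R w) (actX_is_linear w).

Fact actL_is_linear w : linear (@actL f R w).
Proof. by move=> a x y; rewrite /actL !linearP. Qed.
HB.instance Definition _ w := GRing.isLinear.Build R _ _ _ (@actL f R w) (actL_is_linear w).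

End Linearity.

Section FrobeniusLinearity.
Variables (f n : nat) (R : comPzRingType).

Fact piM_is_linear : linear (@piM f R n).
Proof. by move=> a x y; apply/matrixP=> i j; rewrite !mxE. Qed.
HB.instance Definition _ := GRing.isLinear.Build R _ _ _ (@piM f R n) piM_is_linear.

Fact piinvM_is_linear : linear (@piinvM f R n).
Proof. by move=> a x y; apply/matrixP=> i j; rewrite !mxE. Qed.
HB.instance Definition _ := GRing.isLinear.Build R _ _ _ (@piinvM f R n) piinvM_is_linear.

End FrobeniusLinearity.

Section IntLinearity.
Variable f : nat.

Fact resZ_is_linear : linear (@resZ f).
Proof. by move=> a x y; apply/matrixP=> i j; rewrite !mxE; ring. Qed.
HB.instance Definition _ := GRing.isLinear.Build int _ _ _ (@resZ f) resZ_is_linear.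

Fact X0_is_linear : linear (@X0 f).
Proof. by move=> a x y; apply/matrixP=> i j; rewrite !mxE. Qed.
HB.instance Definition _ := GRing.isLinear.Build int _ _ _ (@X0 f) X0_is_linear.

End IntLinearity.

Section DotAction.
Variable f : nat.
Implicit Types w : 'I_f -> 'S_3.

Definition winv w : 'I_f -> 'S_3 := fun i => ((w i)^-1)%g.

Lemma resWE (R : zmodType) (l : 'M[R]_(f, 3)) i j : resW l i j =
  if (j : nat) == 0%N then l i (inord 0) - l i (inord 1) else l i (inord 1) - l i (inord 2).
Proof. exact: mxE. Qed.

Lemma actXE (R : Type) w (l : 'M[R]_(f, 3)) i j : actX w l i j = l i ((w i)^-1 j)%g.
Proof. exact: mxE. Qed.

Lemma liftW_resW (R : zmodType) (l : 'M[R]_(f, 3)) i k :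
  liftW (resW l) i k = l i k - l i (inord 2).
Proof.
rewrite !mxE.
by case: (ord3P k) => ->; rewrite !val_inordE /= ?mxE ?val_inordE /= ?subrr ?addrA ?subrK.
Qed.

Lemma resW_liftW (R : zmodType) : cancel (@liftW f R) (@resW f R).
Proof.
move=> x; apply/matrixP=> i j; rewrite !mxE.
by case: (ord2P j) => ->; rewrite !val_inordE /= ?mxE ?val_inordE /= ?addrK ?subr0.
Qed.

Lemma resW_actX (R : zmodType) w (l : 'M[R]_(f, 3)) : resW (actX w l) = actL w (resW l).
Proof.
apply/matrixP=> i j; rewrite /actL !resWE !actXE !liftW_resW.
by case: ifP => _; rewrite opprB addrA subrK.
Qed.

Lemma actX_winvK (R : Type) w : cancel (@actX f R w) (actX (winv w)).
Proof. by move=> l; apply/matrixP=> i j; rewrite !mxE invgK permK. Qed.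

Lemma actX_winvKV (R : Type) w : cancel (@actX f R (winv w)) (actX w).
Proof. by move=> l; apply/matrixP=> i j; rewrite !mxE invgK permKV. Qed.

Lemma actL_winvK (R : zmodType) w : cancel (@actL f R w) (actL (winv w)).
Proof. by move=> y; rewrite [actL w y]/actL -resW_actX actX_winvK resW_liftW. Qed.

Lemma actL_winvKV (R : zmodType) w : cancel (@actL f R (winv w)) (actL w).
Proof. by move=> y; rewrite [actL (winv w) y]/actL -resW_actX actX_winvKV resW_liftW. Qed.

Lemma resW_etaX : resW (etaX f) = etaL f.
Proof. by apply/matrixP=> i j; rewrite !mxE !val_inordE /=; case: ifP. Qed.

Lemma resW_wt_dotX p w (lam l : 'M[int]_(f, 3)) :
  resW (wt_dotX p w lam l) = wt_dotL p w (resW lam) (resW l).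
Proof. by rewrite /wt_dotX /wt_dotL linearB /= resW_actX !linearD /= linearZ /= resW_etaX natz. Qed.

Lemma wt_dotL_tw p w (lam x : 'M[int]_(f, 2)) : wt_dotL p w lam x = tw_dotL p (actL w lam) w x.
Proof. by rewrite /wt_dotL /tw_dotL -addrA linearD /= linearZ /= natz. Qed.

Section DotActionInverse.
Variables (p : nat) (R : comNzRingType) (w : 'I_f -> 'S_3) (lam : 'M[R]_(f, 2)).

Definition wt_dotL_inv (y : 'M[R]_(f, 2)) : 'M[R]_(f, 2) :=
  actL (winv w) (y + etaL f) - etaL f - p%:R *: lam.

Lemma wt_dotL_invK : cancel wt_dotL_inv (wt_dotL p w lam).
Proof.
by move=> y; rewrite /wt_dotL /wt_dotL_inv (addrC (p%:R *: lam)) !subrK actL_winvKV addrK.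
Qed.

Lemma wt_dotLK : cancel (wt_dotL p w lam) wt_dotL_inv.
Proof.
by move=> x; rewrite /wt_dotL /wt_dotL_inv subrK actL_winvK addrK (addrC (p%:R *: lam)) addrK.
Qed.

Lemma wt_dotL_inj : injective (wt_dotL p w lam).
Proof. exact: can_inj wt_dotLK. Qed.

End DotActionInverse.

Lemma map_mx_actL (R S : zmodType) (phi : {additive R -> S}) w (x : 'M[R]_(f, 2)) :
  map_mx phi (actL w x) = actL w (map_mx phi x).
Proof.
by apply/matrixP=> i j; rewrite /actL !mxE; do !case: ifP => _; rewrite ?raddfB ?raddfD ?raddf0.
Qed.

Lemma map_mx_wt_dotL p (R S : comNzRingType) (phi : {rmorphism R -> S}) w
    (lam x : 'M[R]_(f, 2)) :
  map_mx phi (wt_dotL p w lam x) = wt_dotL p w (map_mx phi lam) (map_mx phi x).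
Proof.
have map_etaL : map_mx phi (etaL f) = etaL f by apply/matrixP=> i j; rewrite !mxE rmorph1.
by rewrite /wt_dotL raddfB /= map_mx_actL !raddfD /= map_mxZ rmorph_nat map_etaL.
Qed.

End DotAction.

Definition in_alc_row (p : nat) (t : AB) (x0 x1 : R) : Prop :=
  let y0 := x0 + 1 in let y1 := x1 + 1 in
  match t with
  | AlcA => 0 < y0 /\ 0 < y1 /\ y0 + y1 < p%:R
  | AlcB => p%:R < y0 + y1 /\ y0 < p%:R /\ y1 < p%:R
  end.

Definition perm3_fun (s : seq nat) (j : 'I_3) : 'I_3 := inord (nth 0%N s j).

Lemma perm3_fun_inj (s : seq nat) :
  size s = 3%N -> uniq s -> all (fun k => k < 3)%N s -> injective (perm3_fun s).
Proof.
move=> s3 s_uniq /all_nthP s_lt3 j k /(congr1 val) /=.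
rewrite !inordK ?s_lt3 ?s3 // => /eqP; rewrite nth_uniq ?s3 // => /eqP; exact: val_inj.
Qed.

Definition perm3 (a b c : nat)
    (H : [&& uniq [:: a; b; c] & all (fun k => k < 3)%N [:: a; b; c]]) : 'S_3 :=
  perm (@perm3_fun_inj [:: a; b; c] erefl (andP H).1 (andP H).2).

(* For a class c = <omega, alpha_1^vee - alpha_2^vee> mod 3 of weights of SL_3
   modulo the root lattice and an alcove type b, a pair (lambda, w) with lambda in
   the class -c such that w t_lambda maps A onto b (checked in [alcove_rep_row]). *)
Definition alcove_rep_shift (c : int) (b : AB) : int * int :=
  if c == 0 then (match b with AlcA => (0, 0) | AlcB => (-1, -1) end)
  else if c == 1 then (match b with AlcA => (-1, 0) | AlcB => (1, -1) end)
  else (match b with AlcA => (0, -1) | AlcB => (-1, 1) end).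

Definition alcove_rep_perm (c : int) (b : AB) : 'S_3 :=
  ((if c == 0%R then
      match b with AlcA => @perm3 0%N 1%N 2%N isT | AlcB => @perm3 2%N 1%N 0%N isT end
    else if c == 1%R then
      match b with AlcA => @perm3 1%N 2%N 0%N isT | AlcB => @perm3 0%N 2%N 1%N isT end
    else match b with AlcA => @perm3 2%N 0%N 1%N isT | AlcB => @perm3 1%N 0%N 2%N isT end)^-1)%g.

Section Alcoves.
Variables (f p : nat).
Implicit Types w : 'I_f -> 'S_3.

Lemma actL_perm3 (R : zmodType) w (U : 'M[R]_(f, 2)) i a b c H :
  w i = ((@perm3 a b c H)^-1)%g ->
  actL w U i (inord 0) = liftW U i (inord a) - liftW U i (inord b) /\
  actL w U i (inord 1) = liftW U i (inord b) - liftW U i (inord c).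
Proof.
move=> wi; rewrite /actL !resWE !val_inordE /= !actXE wi invgK !permE.
by rewrite /perm3_fun !val_inordE.
Qed.

Lemma alcove_rep_row c b w (lam : 'M[int]_(f, 2)) i :
  w i = alcove_rep_perm c b -> (lam i (inord 0), lam i (inord 1)) = alcove_rep_shift c b ->
  forall x : 'M[R]_(f, 2), in_alc_row p AlcA (x i (inord 0)) (x i (inord 1)) <->
    in_alc_row p b (wt_dotL p w (toR lam) x i (inord 0)) (wt_dotL p w (toR lam) x i (inord 1)).
Proof.
move=> wi lami x.
have wtE k : wt_dotL p w (toR lam) x i k = actL w (p%:R *: toR lam + x + etaL f) i k - 1.
  by rewrite /wt_dotL; set A := actL _ _; rewrite !mxE.
rewrite !wtE; move: wi lami; rewrite /alcove_rep_perm /alcove_rep_shift.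
case: ifP => _; [|case: ifP => _]; case: b => wi [lam0 lam1];
  have [-> ->] := actL_perm3 (p%:R *: toR lam + x + etaL f) wi;
  rewrite !mxE !val_inordE /= lam0 lam1 ?rmorphN ?rmorph1 ?rmorph0;
  by split=> -[h1 [h2 h3]]; (split; [lra | split; lra]).
Qed.

Lemma maps_A_to_rowwise w (lam : 'M[int]_(f, 2)) (b : alcf f) :
  (forall i (x : 'M[R]_(f, 2)), in_alc_row p AlcA (x i (inord 0)) (x i (inord 1)) <->
     in_alc_row p (b i) (wt_dotL p w (toR lam) x i (inord 0))
                        (wt_dotL p w (toR lam) x i (inord 1))) ->
  maps_A_to p w lam b.
Proof.
move=> rowP y; split=> [y_b | [x [x_A ->]] i]; last exact/rowP/x_A.
exists (wt_dotL_inv p w (toR lam) y); rewrite wt_dotL_invK; split=> // i.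
by apply/(rowP i); rewrite wt_dotL_invK; exact: y_b.
Qed.

Definition root_class (om : 'M[int]_(f, 2)) i : int :=
  ((om i (inord 0) - om i (inord 1)) %% 3)%Z.

Definition rep_weight (om : 'M[int]_(f, 2)) (a : alcf f) : 'M[int]_(f, 2) :=
  \matrix_(i, k) - (if (k : nat) == 0%N then (alcove_rep_shift (root_class om i) (a i)).1
                    else (alcove_rep_shift (root_class om i) (a i)).2).

Definition rep_weyl (om : 'M[int]_(f, 2)) (a : alcf f) : 'I_f -> 'S_3 :=
  fun i => alcove_rep_perm (root_class om (ordS i)) (a (ordS i)).

Lemma alcove_rep_shift_mod3 (d : int) b :
  (3 %| d + ((alcove_rep_shift (d %% 3)%Z b).1 - (alcove_rep_shift (d %% 3)%Z b).2))%Z.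
Proof.
apply/dvdz_mod0P; rewrite -modzDml.
have : (0 <= (d %% 3)%Z < 3)%R by rewrite modz_ge0 // ltz_pmod.
move: (d %% 3)%Z => c c_range; have : c = 0 \/ c = 1 \/ c = 2 by lia.
by case=> [->|[->|->]]; case: b.
Qed.

Lemma decomp_exists (om : 'M[int]_(f, 2)) (a : alcf f) : exists d, decomp p om a d.
Proof.
exists (rep_weight om a, om - rep_weight om a, rep_weyl om a).
have maps : maps_A_to p (rep_weyl om a) (- piinvM (rep_weight om a)) (piinv_alc a).
  apply: maps_A_to_rowwise => i; apply: alcove_rep_row => //.
  by rewrite !mxE !val_inordE /= !opprK; case: alcove_rep_shift.
split; [by rewrite addrC subrK | move=> i | by exists (piinv_alc a) | exact: maps].
rewrite !mxE !val_inordE /=; set s := alcove_rep_shift _ _.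
rewrite (_ : _ - _ - _ = (om i (inord 0) - om i (inord 1)) + (s.1 - s.2)); last by ring.
exact: alcove_rep_shift_mod3.
Qed.

Lemma Trnsp_spec mu sec (om : 'M[int]_(f, 2)) (a : alcf f) :
  exists om1 nu w, decomp p om a (om1, nu, w) /\
  Trnsp p mu sec om a = wt_dotX p w (- piinvM (sec om1)) (mu - etaX f + can nu + sec om1).
Proof.
have := epsilon_spec (inhabits (0, 0, fun _ => 1%g)) (decomp p om a) (decomp_exists om a).
by rewrite /Trnsp; case: (epsilon _ _) => [[om1 nu] w] dec; exists om1, nu, w.
Qed.

End Alcoves.

Section Lattices.
Variables (f p : nat).

Lemma resW_piinvM (R : zmodType) (l : 'M[R]_(f, 3)) : resW (piinvM l) = piinvM (resW l).
Proof. by apply/matrixP=> i j; rewrite !mxE. Qed.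

Lemma resW_piM (R : zmodType) (l : 'M[R]_(f, 3)) : resW (piM l) = piM (resW l).
Proof. by apply/matrixP=> i j; rewrite !mxE. Qed.

Lemma resW_X0 (c : 'M[int]_(f, 1)) : resW (X0 c) = 0.
Proof. by apply/matrixP=> i j; rewrite !mxE; case: ifP => _; rewrite subrr. Qed.

Lemma resW_can (nu : 'M[int]_(f, 2)) : inLR nu -> resW (can nu) = nu.
Proof.
move=> nu_LR; apply/matrixP=> i j; rewrite resWE !mxE !val_inordE /=.
have /dvdzP [t Ht] := nu_LR i.
set a := nu i (inord 0) in Ht *; set b := nu i (inord 1) in Ht *.
rewrite (_ : 2 * a + b = (a - t) * 3); last by lia.
rewrite (_ : a + 2 * b = (b + t) * 3); last by lia.
by rewrite !mulzK //; case: (ord2P j) => ->; rewrite !val_inordE /=; lia.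
Qed.

Lemma congrX_refl (l : 'M[int]_(f, 3)) : congrX p l l.
Proof. by exists 0; rewrite subrr !(linear0, scaler0, addr0). Qed.

Lemma resW_congrX (l1 l2 : 'M[int]_(f, 3)) : congrX p l1 l2 -> resW l1 = resW l2.
Proof.
case=> c l12; apply/eqP; rewrite -subr_eq0 -linearB /= l12 linearB /= linearZ /=.
by rewrite resW_piM resW_X0 !(linear0, scaler0, addr0).
Qed.

Lemma resW_eq0_X0 (u : 'M[int]_(f, 3)) : resW u = 0 -> u = X0 (\col_i u i (inord 2)).
Proof.
move=> /matrixP u0; apply/matrixP=> i k; rewrite !mxE.
have := u0 i (inord 0); have := u0 i (inord 1); rewrite !mxE !val_inordE /=.
by case: (ord3P k) => ->; lia.
Qed.

Lemma can_resW (v : 'M[int]_(f, 3)) : resZ v = 0 -> inLR (resW v) /\ can (resW v) = v.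
Proof.
move=> /matrixP v0.
have v2 i : v i (inord 2) = - v i (inord 0) - v i (inord 1).
  by have := v0 i 0; rewrite !mxE; lia.
split=> [i | ].
  by rewrite !mxE !val_inordE /= v2; apply/dvdzP; exists (- v i (inord 1)); ring.
apply/matrixP=> i k; rewrite !mxE !val_inordE /= v2.
rewrite (_ : 2 * _ + _ = v i (inord 0) * 3); last by ring.
rewrite (_ : _ + 2 * _ = (v i (inord 0) + v i (inord 1)) * 3); last by ring.
by rewrite !mulzK //; case: (ord3P k) => ->; rewrite !val_inordE /= ?v2; ring.
Qed.

Lemma not_dvdz_between (q k y : int) : k * q < y < (k + 1) * q -> ~~ (q %| y)%Z.
Proof.
case/andP=> lo hi; have q_gt0 : 0 < q by lia.
apply/negP=> /dvdzP [m yE]; rewrite yE !ltr_pM2r // in lo hi; lia.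
Qed.

Lemma pregL_of_in_alc (b : alcf f) (Y : 'M[int]_(f, 2)) : in_alc p b (toR Y) -> pregL p Y.
Proof.
move=> Y_b i; have := Y_b i; rewrite /toR !mxE.
have intrD1 (z : int) : (z%:~R : R) + 1 = (z + 1)%:~R by rewrite rmorphD rmorph1.
have intrD (z z' : int) : (z%:~R : R) + z'%:~R = (z + z')%:~R by rewrite rmorphD.
rewrite -[p%:R]/((p%:Z)%:~R : R) !intrD1 !intrD.
rewrite (_ : _ + _ + 2 = Y i (inord 0) + 1 + (Y i (inord 1) + 1)); last by ring.
by case: (b i) => /=; rewrite ?ltr_int ?ltr0z => -[h1 [h2 h3]]; do ?split;
  first [apply: (@not_dvdz_between _ 0); lia | apply: (@not_dvdz_between _ 1); lia].
Qed.

Lemma resZ_actX w (l : 'M[int]_(f, 3)) : resZ (actX w l) = resZ l.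
Proof.
have sum3 (F : 'I_3 -> int) : \sum_k F k = F (inord 0) + F (inord 1) + F (inord 2).
  rewrite !big_ord_recl big_ord0 addr0 addrA.
  by congr (F _ + F _ + F _); apply: val_inj; rewrite /= inordK.
apply/matrixP=> i j; rewrite !mxE -(sum3 (l i)) -(sum3 (fun k => l i ((w i)^-1 k)%g)).
by rewrite [RHS](reindex_inj (@perm_inj _ ((w i)^-1)%g)).
Qed.

Lemma resZ_etaX : resZ (etaX f) = 0.
Proof. by apply/matrixP=> i j; rewrite !mxE !val_inordE. Qed.

Lemma resZ_can (nu : 'M[int]_(f, 2)) : resZ (can nu) = 0.
Proof. by apply/matrixP=> i j; rewrite !mxE !val_inordE /=; ring. Qed.

Lemma resZ_piinvM (l : 'M[int]_(f, 3)) : resZ (piinvM l) = piinvM (resZ l).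
Proof. by apply/matrixP=> i j; rewrite !mxE. Qed.

End Lattices.

Section Translation.
Variables (f p : nat) (sec : 'M[int]_(f, 2) -> 'M[int]_(f, 3)).
Hypothesis resW_sec : forall om, resW (sec om) = om.
Variable mu : 'M[int]_(f, 3).

Lemma resW_Trnsp om' a : exists w lam, maps_A_to p w lam (piinv_alc a) /\
  resW (Trnsp p mu sec om' a) = wt_dotL p w lam (om' + resW (mu - etaX f)).
Proof.
have [om [nu [w [[-> nu_LR _ maps] ->]]]] := Trnsp_spec p mu sec om' a.
exists w, (- piinvM om); split=> //.
rewrite resW_wt_dotX linearN /= resW_piinvM resW_sec.
rewrite linearD /= resW_sec linearD /= (resW_can nu_LR).
by congr (wt_dotL _ _ _ _); rewrite addrC addrCA addrC.
Qed.

Lemma in_alc_Trnsp a om' :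
  LWmu p mu om' -> in_alc p (piinv_alc a) (toR (resW (Trnsp p mu sec om' a))).
Proof.
move=> om'_mu; have [w [lam [maps ->]]] := resW_Trnsp om' a.
by apply/maps; exists (toR (om' + resW (mu - etaX f))); split=> //; exact: map_mx_wt_dotL.
Qed.

Lemma LWmu_of_inC0mod om' : inC0mod p (Trnsp p mu sec om' (@Aunder f)) -> LWmu p mu om'.
Proof.
case=> l [l_T l_C0]; have [w [lam [maps T_E]]] := resW_Trnsp om' (@Aunder f).
move: l_C0; rewrite /inC0 (resW_congrX l_T) T_E /toR map_mx_wt_dotL.
by case/maps=> x [x_A /wt_dotL_inj x_E]; rewrite /LWmu /toR x_E.
Qed.

Lemma Trnsp_congrX_Wa om' a : exists nu w, inLR nu /\
  congrX p (Trnsp p mu sec om' a)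
    (Wa_dotX p nu w (mu - etaX f + (sec om' - p%:Z *: piinvM (sec om')))).
Proof.
have [om [nu [w [[om'E nu_LR _ _] ->]]]] := Trnsp_spec p mu sec om' a.
set nu' := resW (actX w (piinvM (can nu))).
have [nu'_LR can_nu'] : inLR nu' /\ can nu' = actX w (piinvM (can nu)).
  by apply: can_resW; rewrite resZ_actX resZ_piinvM resZ_can linear0.
exists nu', w; split=> //.
set u := sec om' - sec om - can nu.
have u_X0 : u = X0 (\col_i u i (inord 2)).
  apply: resW_eq0_X0; rewrite !linearB /= !resW_sec (resW_can nu_LR) om'E.
  by rewrite [om + nu]addrC addrK subrr.
exists (piinvM (\col_i u i (inord 2))).
have -> : sec om' = sec om + can nu + X0 (\col_i u i (inord 2)).
  by rewrite -u_X0 /u; apply/matrixP=> i j; rewrite !mxE; ring.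
rewrite /wt_dotX /Wa_dotX can_nu'.
by apply/matrixP=> i j; rewrite !mxE ord_predK; ring.
Qed.

Lemma resZ_Trnsp_sub_mu om' a :
  exists y, resZ (Trnsp p mu sec om' a - mu) = p%:Z *: y - piM y.
Proof.
have [om [nu [w [_ ->]]]] := Trnsp_spec p mu sec om' a.
exists (- piinvM (resZ (sec om))).
rewrite /wt_dotX !linearB /= resZ_actX.
by apply/matrixP=> i j; rewrite !mxE ord_predK !val_inordE /=; ring.
Qed.

End Translation.

Theorem proposition2p4 (f p : nat) (Hf : (0 < f)%N) (Hp : prime p)
    (sec : 'M[int]_(f, 2) -> 'M[int]_(f, 3))
    (Hsec : forall om : 'M[int]_(f, 2), resW (sec om) = om)
    (mu : 'M[int]_(f, 3)) :
  (* (1) *)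
  (forall om' : 'M[int]_(f, 2),
      LWmu p mu om' <-> inC0mod p (Trnsp p mu sec om' (@Aunder f))) /\
  (forall om' : 'M[int]_(f, 2),
      LWmu p mu om' -> pregX p (Trnsp p mu sec om' (@Aunder f))) /\
  (* (2) *)
  (forall (a : alcf f) (om' : 'M[int]_(f, 2)), LWmu p mu om' ->
      let T := Trnsp p mu sec om' a in
      [/\ pregL p (resW T),
          exists (lam : 'M[int]_(f, 2)) (w : 'I_f -> 'S_3),
            resW T = tw_dotL p lam w (om' + resW (mu - @etaX f)),
          in_alc p (piinv_alc a) (toR (resW T)) &
          exists (nu : 'M[int]_(f, 2)) (w : 'I_f -> 'S_3),
            inLR nu /\
            congrX p T (Wa_dotX p nu w
                          (mu - @etaX f + (sec om' - p%:Z *: piinvM (sec om'))))]) /\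
  (* (3) *)
  (forall (a : alcf f) (om' : 'M[int]_(f, 2)),
      let T := Trnsp p mu sec om' a in
      resZ (T - mu + @etaX f) = resZ (T - mu) /\
      exists y : 'M[int]_(f, 1), resZ (T - mu) = p%:Z *: y - piM y).
Proof.
split; [|split; [|split]].
- move=> om'; split=> [om'_mu | /(LWmu_of_inC0mod Hsec) //].
  by exists (Trnsp p mu sec om' (@Aunder f)); split; [exact: congrX_refl | exact: in_alc_Trnsp].
- by move=> om' /(in_alc_Trnsp Hsec (@Aunder f)) /pregL_of_in_alc.
- move=> a om' om'_mu /=; have T_a := in_alc_Trnsp Hsec a om'_mu.
  split; [exact: pregL_of_in_alc T_a | | exact: T_a | exact: Trnsp_congrX_Wa].
  have [w [lam [_ ->]]] := resW_Trnsp p Hsec mu om' a.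
  by exists (actL w lam), w; rewrite wt_dotL_tw.
- move=> a om' /=; split; last exact: resZ_Trnsp_sub_mu.
  by rewrite linearD /= resZ_etaX addr0.
Qed.
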